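(* For any set of rule schemes $\mathcal{R}\subseteq\{N,H,P,F,wF\}$ there exists a non-commutative spacetime $\mathcal{S}\in\mathbf{ST}(\mathcal{R})$ such that for every sequent, if $\mathcal{S}\vDash\Gamma\Rightarrow A$ then $\Gamma\vdash_{\mathbf{STL}(\mathcal{R})}A$. Likewise there exists a spacetime $\mathcal{S}\in i\mathbf{ST}(\mathcal{R})$ such that if $\mathcal{S}\vDash\Gamma\Rightarrow A$ then $\Gamma\vdash_{i\mathbf{STL}(\mathcal{R})}A$.
   Context: Formulas of $\mathcal{L}_\nabla$ are built from propositional variables and constants $1,\top,\bot$ by binary $\wedge,\vee,\otimes,\to$ and unary $\nabla$. A sequent is $\Gamma\Rightarrow A$ with $\Gamma$ a finite (possibly empty) sequence; $\nabla\Gamma$ applies $\nabla$ to each member. $\mathbf{STL}$ has axioms $A\Rightarrow A$, $\Rightarrow1$, $\nabla1\Rightarrow1$, $\Gamma\Rightarrow\top$, $\Gamma,\bot,\Sigma\Rightarrow A$ and rules (premises / conclusion): cut: $\Gamma\Rightarrow A$, $\Pi,A,\Sigma\Rightarrow B$ / $\Pi,\Gamma,\Sigma\Rightarrow B$; $L\wedge$: $\Gamma,A,\Sigma\Rightarrow C$ / $\Gamma,A\wedge B,\Sigma\Rightarrow C$ and $\Gamma,B,\Sigma\Rightarrow C$ / $\Gamma,A\wedge B,\Sigma\Rightarrow C$; $R\wedge$: $\Gamma\Rightarrow A$, $\Gamma\Rightarrow B$ / $\Gamma\Rightarrow A\wedge B$; $L\vee$: $\Gamma,A,\Sigma\Rightarrow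 C$, $\Gamma,B,\Sigma\Rightarrow C$ / $\Gamma,A\vee B,\Sigma\Rightarrow C$; $R\vee$: $\Gamma\Rightarrow A$ / $\Gamma\Rightarrow A\vee B$ and $\Gamma\Rightarrow B$ / $\Gamma\Rightarrow A\vee B$; $L1$: $\Gamma,\Sigma\Rightarrow A$ / $\Gamma,1,\Sigma\Rightarrow A$; $L\otimes$: $\Gamma,A,B,\Sigma\Rightarrow C$ / $\Gamma,A\otimes B,\Sigma\Rightarrow C$; $R\otimes$: $\Gamma\Rightarrow A$, $\Sigma\Rightarrow B$ / $\Gamma,\Sigma\Rightarrow A\otimes B$; $(\nabla)$: $A\Rightarrow B$ / $\nabla A\Rightarrow\nabla B$; Oplax: $\nabla A,\nabla B\Rightarrow C$ / $\nabla(A\otimes B)\Rightarrow C$; $L\to$: $\Gamma\Rightarrow A$, $\Pi,B,\Sigma\Rightarrow C$ / $\Pi,\Gamma,\nabla(A\to B),\Sigma\Rightarrow C$; $R\to$: $A,\nabla\Gamma\Rightarrow B$ / $\Gamma\Rightarrow A\to B$. Rule schemes: $(N)$: $\Gamma\Rightarrow A$ / $\nabla\Gamma\Rightarrow\nabla A$; $(P)$: $\Gamma\Rightarrow\nabla A$ / $\Gamma\Rightarrow A$; $(F)$: $\Gamma\Rightarrow A$ / $\Gamma\Rightarrow\nabla A$; $(wF)$: $\nabla A\Rightarrow\bot$ / $A\Rightarrow\bot$; $(H)$: $\Gamma,A_1\to B_1,\dots,A_n\to B_n\Rightarrow C$ / $\nabla\Gamma,\nabla A_1\to\nabla B_1,\dots,\nabla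 A_n\to\nabla B_n\Rightarrow\nabla C$ ($n\ge0$). Structural rules: weakening, contraction and exchange on the left of $\Rightarrow$. $\mathbf{STL}(\mathcal{R})$ is $\mathbf{STL}$ plus the schemes in $\mathcal{R}$; $i\mathbf{STL}(\mathcal{R})$ adds the structural rules; $\Gamma\vdash_L A$ means $L$ derives $\Gamma\Rightarrow A$. Semantics: a quantale is a monoidal poset (monoid with multiplication monotone in each argument) with all joins over which multiplication distributes; a locale is a quantale whose multiplication is binary meet with unit the top. A non-commutative spacetime is $\mathcal{S}=(\mathscr{X},\nabla)$ with $\mathscr{X}$ a quantale and $\nabla$ join preserving and oplax monoidal; a spacetime is one with $\mathscr{X}$ a locale. Its implication $\to_{\mathcal{S}}$ is characterized by $a\otimes\nabla b\le c$ iff $b\le a\to_{\mathcal{S}}c$. A valuation $V$ maps formulas to $\mathscr{X}$ with $V(1)=e$, $V(\bot)$ bottom, $V(\top)$ top, commuting with $\wedge,\vee,\otimes,\nabla,\to$ (meet, join, $\otimes$, $\nabla$, $\to_{\mathcal{S}}$). $\mathcal{S}\vDash\gamma_1,\dots,\gamma_n\Rightarrow A$ iff $V(\gamma_1)\otimes\cdots\otimes V(\gamma_n)\le V(A)$ for all $V$ (empty product $=e$). $\mathcal{S}$ satisfies $(N)$ if $\nabla e=e$ and $\nabla(a\otimes b)=\nabla a\otimes\nabla b$; $(H)$ if $\nabla$ preserves all structure including the implication; $(P)$ if $\nabla a\le a$; $(F)$ if $a\le\nabla a$; $(wF)$ if $\nabla a=0$ implies $a=0$. $\mathbf{ST}(\mathcal{R})$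 (resp. $i\mathbf{ST}(\mathcal{R})$) is the class of non-commutative spacetimes (resp. spacetimes) satisfying all schemes in $\mathcal{R}$. *)

From Stdlib Require Import List.
Import ListNotations.
Set Implicit Arguments.

Inductive formula : Type :=
| Var : nat -> formula
| One : formula
| Top : formula
| Bot : formula
| And : formula -> formula -> formula
| Or : formula -> formula -> formula
| Tens : formula -> formula -> formula
| Imp : formula -> formula -> formula
| Nab : formula -> formula.

Definition nabs (G : list formula) : list formula := map Nab G.

Inductive scheme : Type := sN | sH | sP | sF | swF.

(* ---------- Sequent calculus ----------
   derivable R st G A : the sequent G => A is derivable in STL(R) (st = false)
   or in iSTL(R) (st = true, structural rules added). R is a set of schemes. *)
Inductive derivable (R : scheme -> Prop) (st : bool) : list formula -> formula -> Prop :=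
| ax_id : forall A, derivable R st [A] A
| ax_one : derivable R st [] One
| ax_nabone : derivable R st [Nab One] One
| ax_top : forall G, derivable R st G Top
| ax_bot : forall G S A, derivable R st (G ++ Bot :: S) A
| r_cut : forall G P S A B,
    derivable R st G A -> derivable R st (P ++ A :: S) B ->
    derivable R st (P ++ G ++ S) B
| r_Land1 : forall G S A B C,
    derivable R st (G ++ A :: S) C -> derivable R st (G ++ And A B :: S) C
| r_Land2 : forall G S A B C,
    derivable R st (G ++ B :: S) C -> derivable R st (G ++ And A B :: S) C
| r_Rand : forall G A B,
    derivable R st G A -> derivable R st G B -> derivable R st G (And A B)
| r_Lor : forall G S A B C,
    derivable R st (G ++ A :: S) C -> derivable R st (G ++ B :: S) C ->
    derivable R st (G ++ Or A B :: S) C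
| r_Ror1 : forall G A B, derivable R st G A -> derivable R st G (Or A B)
| r_Ror2 : forall G A B, derivable R st G B -> derivable R st G (Or A B)
| r_L1 : forall G S A, derivable R st (G ++ S) A -> derivable R st (G ++ One :: S) A
| r_Ltens : forall G S A B C,
    derivable R st (G ++ A :: B :: S) C -> derivable R st (G ++ Tens A B :: S) C
| r_Rtens : forall G S A B,
    derivable R st G A -> derivable R st S B -> derivable R st (G ++ S) (Tens A B)
| r_nab : forall A B, derivable R st [A] B -> derivable R st [Nab A] (Nab B)
| r_oplax : forall A B C,
    derivable R st [Nab A; Nab B] C -> derivable R st [Nab (Tens A B)] C
| r_Limp : forall G P S A B C,
    derivable R st G A -> derivable R st (P ++ B :: S) C ->
    derivable R st (P ++ G ++ Nab (Imp A B) :: S) C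
| r_Rimp : forall G A B,
    derivable R st (A :: nabs G) B -> derivable R st G (Imp A B)
| r_N : forall G A, R sN -> derivable R st G A -> derivable R st (nabs G) (Nab A)
| r_P : forall G A, R sP -> derivable R st G (Nab A) -> derivable R st G A
| r_F : forall G A, R sF -> derivable R st G A -> derivable R st G (Nab A)
| r_wF : forall A, R swF -> derivable R st [Nab A] Bot -> derivable R st [A] Bot
| r_H : forall G (ps : list (formula * formula)) C, R sH ->
    derivable R st (G ++ map (fun p => Imp (fst p) (snd p)) ps) C ->
    derivable R st (nabs G ++ map (fun p => Imp (Nab (fst p)) (Nab (snd p))) ps) (Nab C)
| r_weak : forall G S A C, st = true ->
    derivable R st (G ++ S) C -> derivable R st (G ++ A :: S) C
| r_contr : forall G S A C, st = true ->
    derivable R st (G ++ A :: A :: S) C -> derivable R st (G ++ A :: S) C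
| r_exch : forall G S A B C, st = true ->
    derivable R st (G ++ A :: B :: S) C -> derivable R st (G ++ B :: A :: S) C.

Record ncspacetime : Type := {
  car :> Type;
  le : car -> car -> Prop;
  join : (car -> Prop) -> car;
  mul : car -> car -> car;
  unit : car;
  nab : car -> car;
  le_refl : forall a, le a a;
  le_trans : forall a b c, le a b -> le b c -> le a c;
  le_antisym : forall a b, le a b -> le b a -> a = b;
  join_ub : forall (S : car -> Prop) x, S x -> le x (join S);
  join_least : forall (S : car -> Prop) y, (forall x, S x -> le x y) -> le (join S) y;
  mul_assoc : forall a b c, mul a (mul b c) = mul (mul a b) c;
  mul_1l : forall a, mul unit a = a;
  mul_1r : forall a, mul a unit = a;
  mul_mono : forall a a' b b', le a a' -> le b b' -> le (mul a b) (mul a' b');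
  mul_join_l : forall a (S : car -> Prop),
    mul a (join S) = join (fun y => exists x, S x /\ y = mul a x);
  mul_join_r : forall a (S : car -> Prop),
    mul (join S) a = join (fun y => exists x, S x /\ y = mul x a);
  nab_join : forall (S : car -> Prop),
    nab (join S) = join (fun y => exists x, S x /\ y = nab x);
  nab_oplax_mul : forall a b, le (nab (mul a b)) (mul (nab a) (nab b));
  nab_oplax_unit : le (nab unit) unit
}.

Section Ops.
Variable X : ncspacetime.
Definition bot : X := join X (fun _ => False).
Definition top : X := join X (fun _ => True).
Definition meet (a b : X) : X := join X (fun x => le X x a /\ le X x b).
(* the implication: right adjoint, a ⊗ ∇b ≤ c  iff  b ≤ a -> c *)
Definition impl (a c : X) : X := join X (fun b => le X (mul X a (nab X b)) c).

Fixpoint eval (v : nat -> X) (F : formula) : X :=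
  match F with
  | Var n => v n
  | One => unit X
  | Top => top
  | Bot => bot
  | And A B => meet (eval v A) (eval v B)
  | Or A B => join X (fun x => x = eval v A \/ x = eval v B)
  | Tens A B => mul X (eval v A) (eval v B)
  | Imp A B => impl (eval v A) (eval v B)
  | Nab A => nab X (eval v A)
  end.

Definition prod (l : list X) : X := fold_right (mul X) (unit X) l.

Definition models (G : list formula) (A : formula) : Prop :=
  forall v : nat -> X, le X (prod (map (eval v) G)) (eval v A).

(* a spacetime: the quantale is a locale (mult = binary meet, unit = top) *)
Definition is_locale : Prop :=
  (forall a b, mul X a b = meet a b) /\ unit X = top.

Definition sat_scheme (s : scheme) : Prop :=
  match s with
  | sN => nab X (unit X) = unit X /\ forall a b, nab X (mul X a b) = mul X (nab X a) (nab X b)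
  | sH => nab X (unit X) = unit X /\ (forall a b, nab X (mul X a b) = mul X (nab X a) (nab X b))
          /\ forall a b, nab X (impl a b) = impl (nab X a) (nab X b)
  | sP => forall a, le X (nab X a) a
  | sF => forall a, le X a (nab X a)
  | swF => forall a, nab X a = bot -> a = bot
  end.

Definition in_ST (R : scheme -> Prop) : Prop := forall s, R s -> sat_scheme s.
Definition in_iST (R : scheme -> Prop) : Prop := is_locale /\ in_ST R.
End Ops.

(* The formulas of L_∇ preordered by derivability of the one-premise sequent
   [a => b] form a Lindenbaum algebra.  Its ideal completion (down-closed sets
   containing ⊥ and closed under ∨) is a quantale, and ⊗ and ∇ extend to it
   because both preserve finite joins (∇ is left adjoint to [1 -> _]).  The
   principal ideals ↓A commute with every connective, so a sequent Γ => A
   that is valid in the completion holds in particular under the valuation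
   p ↦ ↓p, which says that ⊗Γ => A, and hence Γ => A, is derivable.  Each
   scheme of R transfers to the completion, and with the structural rules ⊗
   becomes ∧ and 1 becomes ⊤, making the completion a locale. *)

From Stdlib Require Import List.
Import ListNotations.
From Stdlib Require Import FunctionalExtensionality PropExtensionality ProofIrrelevance.

Section Lindenbaum.

Variable R : scheme -> Prop.
Variable st : bool.

Local Notation der := (derivable R st).

Definition entails (a b : formula) : Prop := der [a] b.

Lemma entails_refl a : entails a a.
Proof. apply ax_id. Qed.

Lemma entails_trans a b c : entails a b -> entails b c -> entails a c.
Proof. intros Hab Hbc. exact (r_cut [] [] Hab Hbc). Qed.

Lemma derivable_entails {G a c} : der G a -> entails a c -> der G c.
Proof.
  intros HG Hac. pose proof (r_cut [] [] HG Hac) as H.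
  simpl in H. rewrite app_nil_r in H. exact H.
Qed.

Lemma bot_least a : entails Bot a.
Proof. exact (ax_bot R st [] [] a). Qed.

Lemma or_least a b c : entails a c -> entails b c -> entails (Or a b) c.
Proof. intros Hac Hbc. exact (r_Lor [] [] a b Hac Hbc). Qed.

Lemma or_ub_l a b : entails a (Or a b).
Proof. apply r_Ror1, ax_id. Qed.

Lemma or_ub_r a b : entails b (Or a b).
Proof. apply r_Ror2, ax_id. Qed.

Fixpoint bigor (l : list formula) : formula :=
  match l with [] => Bot | x :: l => Or x (bigor l) end.

Lemma bigor_ub u l : In u l -> entails u (bigor l).
Proof.
  induction l as [|x l IH]; simpl; intros Hu; [contradiction|].
  destruct Hu as [<-|Hu]; [apply or_ub_l|].
  eapply entails_trans; [apply IH, Hu|apply or_ub_r].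
Qed.

Lemma bigor_least l c : (forall u, In u l -> entails u c) -> entails (bigor l) c.
Proof.
  induction l as [|x l IH]; simpl; intros Hl; [apply bot_least|].
  apply or_least; auto.
Qed.

Lemma bigor_incl l1 l2 : incl l1 l2 -> entails (bigor l1) (bigor l2).
Proof. intros Hincl. apply bigor_least. intros u Hu. apply bigor_ub, Hincl, Hu. Qed.

Lemma tens_intro a b : der [a; b] (Tens a b).
Proof. exact (r_Rtens (ax_id R st a) (ax_id R st b)). Qed.

Lemma tens_entails_iff a b c : entails (Tens a b) c <-> der [a; b] c.
Proof.
  split; intros H.
  - exact (derivable_entails (tens_intro a b) H).
  - exact (r_Ltens [] [] a b H).
Qed.

Lemma tens_mono a b a' b' : entails a a' -> entails b b' -> entails (Tens a b) (Tens a' b').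
Proof. intros Ha Hb. apply tens_entails_iff. exact (r_Rtens Ha Hb). Qed.

Lemma tens_assoc_l a b c : entails (Tens a (Tens b c)) (Tens (Tens a b) c).
Proof.
  apply tens_entails_iff. apply (r_Ltens [a] []).
  exact (r_Rtens (tens_intro a b) (ax_id R st c)).
Qed.

Lemma tens_assoc_r a b c : entails (Tens (Tens a b) c) (Tens a (Tens b c)).
Proof.
  apply tens_entails_iff. apply (r_Ltens [] [c]).
  exact (r_Rtens (ax_id R st a) (tens_intro b c)).
Qed.

Lemma tens_one_l a : entails (Tens One a) a.
Proof. apply tens_entails_iff. apply (r_L1 [] [a]), ax_id. Qed.

Lemma tens_one_r a : entails (Tens a One) a.
Proof. apply tens_entails_iff. apply (r_L1 [a] []), ax_id. Qed.

Lemma one_tens_l a : entails a (Tens One a).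
Proof. exact (r_Rtens (ax_one R st) (ax_id R st a)). Qed.

Lemma one_tens_r a : entails a (Tens a One).
Proof. exact (r_Rtens (ax_id R st a) (ax_one R st)). Qed.

Lemma imp_elim a b : der [a; Nab (Imp a b)] b.
Proof. exact (r_Limp [] [] b (ax_id R st a) (ax_id R st b)). Qed.

Lemma imp_entails_iff a b c : entails b (Imp a c) <-> der [a; Nab b] c.
Proof.
  split; intros H.
  - apply tens_entails_iff.
    eapply entails_trans; [apply tens_mono; [apply entails_refl|apply r_nab, H]|].
    apply tens_entails_iff, imp_elim.
  - exact (r_Rimp [b] H).
Qed.

Lemma nab_imp_one_entails c : entails (Nab (Imp One c)) c.
Proof. exact (r_cut [] [Nab (Imp One c)] (ax_one R st) (imp_elim One c)). Qed.

Lemma entails_imp_one_nab a : entails a (Imp One (Nab a)).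
Proof. apply imp_entails_iff. exact (r_L1 [] [Nab a] (ax_id R st (Nab a))). Qed.

Lemma imp_one_mono a b : entails a b -> entails (Imp One a) (Imp One b).
Proof. intros Hab. apply imp_entails_iff. exact (derivable_entails (imp_elim One a) Hab). Qed.

Lemma nab_entails_iff a c : entails (Nab a) c <-> entails a (Imp One c).
Proof.
  split; intros H.
  - eapply entails_trans; [apply entails_imp_one_nab|apply imp_one_mono, H].
  - eapply entails_trans; [apply r_nab, H|apply nab_imp_one_entails].
Qed.

Record join_preserving (g : formula -> formula) : Prop := {
  jp_mono : forall a b, entails a b -> entails (g a) (g b);
  jp_bot : entails (g Bot) Bot;
  jp_or : forall a b, entails (g (Or a b)) (Or (g a) (g b)) }.

Arguments jp_mono {g} _ {a b}.
Arguments jp_bot {g}.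
Arguments jp_or {g}.

Lemma join_preserving_comp {g h} :
  join_preserving g -> join_preserving h -> join_preserving (fun x => g (h x)).
Proof.
  intros [g_mono g_bot g_or] [h_mono h_bot h_or]; split; intros.
  - auto.
  - eapply entails_trans; [apply g_mono, h_bot|exact g_bot].
  - eapply entails_trans; [apply g_mono, h_or|apply g_or].
Qed.

Lemma join_preserving_nab : join_preserving Nab.
Proof.
  split.
  - apply r_nab.
  - apply nab_entails_iff, bot_least.
  - intros a b. apply nab_entails_iff.
    apply or_least; apply nab_entails_iff; [apply or_ub_l|apply or_ub_r].
Qed.

Lemma join_preserving_tens_l a : join_preserving (fun x => Tens a x).
Proof.
  split.
  - intros; apply tens_mono; auto using entails_refl.
  - apply tens_entails_iff. exact (ax_bot R st [a] [] Bot).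
  - intros x y. apply tens_entails_iff. apply (r_Lor [a] []).
    + apply r_Ror1, tens_intro.
    + apply r_Ror2, tens_intro.
Qed.

Lemma join_preserving_tens_r b : join_preserving (fun x => Tens x b).
Proof.
  split.
  - intros; apply tens_mono; auto using entails_refl.
  - apply tens_entails_iff. exact (ax_bot R st [] [b] Bot).
  - intros x y. apply tens_entails_iff. apply (r_Lor [] [b]).
    + apply r_Ror1, tens_intro.
    + apply r_Ror2, tens_intro.
Qed.

Record ideal : Type := {
  mem : formula -> Prop;
  mem_down : forall a b, entails a b -> mem b -> mem a;
  mem_bot : mem Bot;
  mem_or : forall a b, mem a -> mem b -> mem (Or a b) }.

Arguments mem_down i {a b}.

Lemma ideal_ext (I J : ideal) : (forall x, mem I x <-> mem J x) -> I = J.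
Proof.
  destruct I as [m1 d1 b1 o1], J as [m2 d2 b2 o2]; simpl; intros Hm.
  assert (m1 = m2) by (extensionality x; apply propositional_extensionality, Hm).
  subst m2. f_equal; apply proof_irrelevance.
Qed.

Lemma mem_bigor (I : ideal) l : (forall u, In u l -> mem I u) -> mem I (bigor l).
Proof.
  induction l as [|x l IH]; simpl; intros Hl; [apply mem_bot|].
  apply mem_or; auto.
Qed.

Definition ideal_le (I J : ideal) : Prop := forall x, mem I x -> mem J x.

Lemma ideal_le_refl I : ideal_le I I.
Proof. intros x; auto. Qed.

Lemma ideal_le_trans I J K : ideal_le I J -> ideal_le J K -> ideal_le I K.
Proof. unfold ideal_le; auto. Qed.

Lemma ideal_le_antisym I J : ideal_le I J -> ideal_le J I -> I = J.
Proof. intros HIJ HJI. apply ideal_ext. split; auto. Qed.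

Definition principal (A : formula) : ideal.
Proof.
  refine {| mem := fun x => entails x A |}.
  - intros a b Hab Hb. eapply entails_trans; eauto.
  - apply bot_least.
  - intros; apply or_least; auto.
Defined.

Lemma principal_eq A B : entails A B -> entails B A -> principal A = principal B.
Proof.
  intros HAB HBA. apply ideal_le_antisym; intros x Hx; simpl in *; eapply entails_trans; eauto.
Qed.

Definition preimage {g} (Hg : join_preserving g) (K : ideal) : ideal.
Proof.
  refine {| mem := fun x => mem K (g x) |}.
  - intros a b Hab Hb. exact (mem_down K (jp_mono Hg Hab) Hb).
  - exact (mem_down K (jp_bot Hg) (mem_bot K)).
  - intros a b Ha Hb. exact (mem_down K (jp_or Hg a b) (mem_or K _ _ Ha Hb)).
Defined.

Definition ideal_join (S : ideal -> Prop) : ideal.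
Proof.
  refine {| mem := fun x => exists l,
              (forall u, In u l -> exists I, S I /\ mem I u) /\ entails x (bigor l) |}.
  - intros a b Hab [l [Hl Hb]]. exists l. split; [exact Hl|]. eapply entails_trans; eauto.
  - exists []. split; [intros u []|apply entails_refl].
  - intros a b [l1 [H1 Ha]] [l2 [H2 Hb]]. exists (l1 ++ l2). split.
    + intros u Hu. apply in_app_or in Hu. destruct Hu; auto.
    + apply or_least.
      * eapply entails_trans; [exact Ha|apply bigor_incl, incl_appl, incl_refl].
      * eapply entails_trans; [exact Hb|apply bigor_incl, incl_appr, incl_refl].
Defined.

Lemma ideal_join_ub (S : ideal -> Prop) I : S I -> ideal_le I (ideal_join S).
Proof.
  intros HI x Hx. exists [x]. split.
  - intros u [<-|[]]. eauto.
  - apply or_ub_l.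
Qed.

Lemma ideal_join_least (S : ideal -> Prop) K :
  (forall I, S I -> ideal_le I K) -> ideal_le (ideal_join S) K.
Proof.
  intros HS x [l [Hl Hx]]. apply (mem_down K Hx), mem_bigor.
  intros u Hu. destruct (Hl u Hu) as [I [HI Iu]]. exact (HS I HI u Iu).
Qed.

Lemma ideal_join_principal (S : ideal -> Prop) A :
  (forall I, S I -> ideal_le I (principal A)) -> mem (ideal_join S) A ->
  ideal_join S = principal A.
Proof.
  intros HS HA. apply ideal_le_antisym.
  - apply ideal_join_least, HS.
  - intros x Hx. exact (mem_down _ Hx HA).
Qed.

(* No generated closure is needed: [Tens a b ∨ Tens a' b'] lies below
   [Tens (a ∨ a') (b ∨ b')]. *)
Definition ideal_mul (I J : ideal) : ideal.
Proof.
  refine {| mem := fun x => exists a b, mem I a /\ mem J b /\ entails x (Tens a b) |}.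
  - intros x y Hxy [a [b [Ia [Jb Hy]]]]. exists a, b. repeat split; auto.
    eapply entails_trans; eauto.
  - exists Bot, Bot. repeat split; try apply mem_bot. apply bot_least.
  - intros x y [a [b [Ia [Jb Hx]]]] [a' [b' [Ia' [Jb' Hy]]]].
    exists (Or a a'), (Or b b'). repeat split; try apply mem_or; auto.
    apply or_least; [eapply entails_trans; [exact Hx|]|eapply entails_trans; [exact Hy|]];
      apply tens_mono; auto using or_ub_l, or_ub_r.
Defined.

Lemma ideal_mul_in (I J : ideal) a b : mem I a -> mem J b -> mem (ideal_mul I J) (Tens a b).
Proof. intros Ia Jb. exists a, b. repeat split; auto using entails_refl. Qed.

Lemma ideal_mul_least (I J K : ideal) :
  (forall a b, mem I a -> mem J b -> mem K (Tens a b)) -> ideal_le (ideal_mul I J) K.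
Proof. intros HK x [a [b [Ia [Jb Hx]]]]. exact (mem_down K Hx (HK a b Ia Jb)). Qed.

Definition ideal_nab (I : ideal) : ideal.
Proof.
  refine {| mem := fun x => exists a, mem I a /\ entails x (Nab a) |}.
  - intros x y Hxy [a [Ia Hy]]. exists a. split; auto. eapply entails_trans; eauto.
  - exists Bot. split; [apply mem_bot|apply bot_least].
  - intros x y [a [Ia Hx]] [b [Ib Hy]]. exists (Or a b). split; [apply mem_or; auto|].
    apply or_least.
    + eapply entails_trans; [exact Hx|apply r_nab, or_ub_l].
    + eapply entails_trans; [exact Hy|apply r_nab, or_ub_r].
Defined.

Lemma ideal_nab_in (I : ideal) a : mem I a -> mem (ideal_nab I) (Nab a).
Proof. intros Ia. exists a. split; auto using entails_refl. Qed.

Lemma ideal_nab_least (I K : ideal) :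
  (forall a, mem I a -> mem K (Nab a)) -> ideal_le (ideal_nab I) K.
Proof. intros HK x [a [Ia Hx]]. exact (mem_down K Hx (HK a Ia)). Qed.

Definition ideal_unit : ideal := principal One.

Lemma ideal_mul_assoc I J K : ideal_mul I (ideal_mul J K) = ideal_mul (ideal_mul I J) K.
Proof.
  apply ideal_le_antisym; apply ideal_mul_least.
  - intros a y Ia [b [c [Jb [Kc Hy]]]].
    exists (Tens a b), c. repeat split; auto using ideal_mul_in.
    eapply entails_trans; [apply tens_mono; [apply entails_refl|exact Hy]|apply tens_assoc_l].
  - intros y c [a [b [Ia [Jb Hy]]]] Kc.
    exists a, (Tens b c). repeat split; auto using ideal_mul_in.
    eapply entails_trans; [apply tens_mono; [exact Hy|apply entails_refl]|apply tens_assoc_r].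
Qed.

Lemma ideal_mul_1_l I : ideal_mul ideal_unit I = I.
Proof.
  apply ideal_le_antisym.
  - apply ideal_mul_least. intros a y Ha Iy. apply (mem_down I (b := y)); [|exact Iy].
    eapply entails_trans; [apply tens_mono; [exact Ha|apply entails_refl]|apply tens_one_l].
  - intros x Ix. apply (mem_down _ (one_tens_l x)), ideal_mul_in; [apply entails_refl|exact Ix].
Qed.

Lemma ideal_mul_1_r I : ideal_mul I ideal_unit = I.
Proof.
  apply ideal_le_antisym.
  - apply ideal_mul_least. intros y a Iy Ha. apply (mem_down I (b := y)); [|exact Iy].
    eapply entails_trans; [apply tens_mono; [apply entails_refl|exact Ha]|apply tens_one_r].
  - intros x Ix. apply (mem_down _ (one_tens_r x)), ideal_mul_in; [exact Ix|apply entails_refl].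
Qed.

Lemma ideal_mul_mono I I' J J' :
  ideal_le I I' -> ideal_le J J' -> ideal_le (ideal_mul I J) (ideal_mul I' J').
Proof. intros HI HJ. apply ideal_mul_least. intros a b Ia Jb. apply ideal_mul_in; auto. Qed.

Lemma ideal_mul_join_l I (S : ideal -> Prop) :
  ideal_mul I (ideal_join S) = ideal_join (fun y => exists x, S x /\ y = ideal_mul I x).
Proof.
  apply ideal_le_antisym.
  - apply ideal_mul_least. intros a y Ia Sy.
    refine (ideal_join_least _ (preimage (join_preserving_tens_l a) (ideal_join _)) _ y Sy).
    intros J SJ u Ju. apply (ideal_join_ub _ (ideal_mul I J)); eauto using ideal_mul_in.
  - apply ideal_join_least. intros K [J [SJ ->]].
    apply ideal_mul_mono; [apply ideal_le_refl|apply ideal_join_ub, SJ].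
Qed.

Lemma ideal_mul_join_r I (S : ideal -> Prop) :
  ideal_mul (ideal_join S) I = ideal_join (fun y => exists x, S x /\ y = ideal_mul x I).
Proof.
  apply ideal_le_antisym.
  - apply ideal_mul_least. intros y a Sy Ia.
    refine (ideal_join_least _ (preimage (join_preserving_tens_r a) (ideal_join _)) _ y Sy).
    intros J SJ u Ju. apply (ideal_join_ub _ (ideal_mul J I)); eauto using ideal_mul_in.
  - apply ideal_join_least. intros K [J [SJ ->]].
    apply ideal_mul_mono; [apply ideal_join_ub, SJ|apply ideal_le_refl].
Qed.

Lemma ideal_nab_mono I J : ideal_le I J -> ideal_le (ideal_nab I) (ideal_nab J).
Proof. intros HIJ. apply ideal_nab_least. intros a Ia. apply ideal_nab_in; auto. Qed.

Lemma ideal_nab_join (S : ideal -> Prop) :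
  ideal_nab (ideal_join S) = ideal_join (fun y => exists x, S x /\ y = ideal_nab x).
Proof.
  apply ideal_le_antisym.
  - apply ideal_nab_least. intros y Sy.
    refine (ideal_join_least _ (preimage join_preserving_nab (ideal_join _)) _ y Sy).
    intros J SJ u Ju. apply (ideal_join_ub _ (ideal_nab J)); eauto using ideal_nab_in.
  - apply ideal_join_least. intros K [J [SJ ->]]. apply ideal_nab_mono, ideal_join_ub, SJ.
Qed.

Lemma ideal_nab_oplax_mul I J :
  ideal_le (ideal_nab (ideal_mul I J)) (ideal_mul (ideal_nab I) (ideal_nab J)).
Proof.
  intros x [y [[a [b [Ia [Jb Hy]]]] Hx]]. exists (Nab a), (Nab b).
  repeat split; auto using ideal_nab_in.
  eapply entails_trans; [exact Hx|]. eapply entails_trans; [apply r_nab, Hy|].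
  apply r_oplax, tens_intro.
Qed.

Lemma ideal_nab_oplax_unit : ideal_le (ideal_nab ideal_unit) ideal_unit.
Proof.
  apply ideal_nab_least. intros a Ha. simpl in *.
  eapply entails_trans; [apply r_nab, Ha|apply ax_nabone].
Qed.

Definition lindenbaum : ncspacetime :=
  @Build_ncspacetime ideal ideal_le ideal_join ideal_mul ideal_unit ideal_nab
    ideal_le_refl ideal_le_trans ideal_le_antisym ideal_join_ub ideal_join_least
    ideal_mul_assoc ideal_mul_1_l ideal_mul_1_r ideal_mul_mono
    ideal_mul_join_l ideal_mul_join_r ideal_nab_join
    ideal_nab_oplax_mul ideal_nab_oplax_unit.

Lemma impl_mem_iff (I K : ideal) b :
  mem (impl lindenbaum I K) b <-> forall a, mem I a -> mem K (Tens a (Nab b)).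
Proof.
  split.
  - intros Hb a Ia.
    pose proof (join_preserving_comp (join_preserving_tens_l a) join_preserving_nab) as Hg.
    refine (ideal_join_least _ (preimage Hg K) _ b Hb).
    intros J HJ u Ju. apply HJ. apply ideal_mul_in; auto using ideal_nab_in.
  - intros HK. apply (ideal_join_ub _ (principal b)); [|apply entails_refl].
    apply ideal_mul_least. intros a y Ia [j [Hj Hy]]. eapply (mem_down K); [|exact (HK a Ia)].
    apply tens_mono; [apply entails_refl|]. eapply entails_trans; [exact Hy|apply r_nab, Hj].
Qed.

Lemma bot_principal : bot lindenbaum = principal Bot.
Proof. apply ideal_join_principal; [intros I []|apply mem_bot]. Qed.

Lemma top_principal : top lindenbaum = principal Top.
Proof.
  apply ideal_join_principal; [intros I _ x _; apply ax_top|].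
  apply (ideal_join_ub _ (principal Top)); [exact I|apply entails_refl].
Qed.

Lemma meet_principal A B :
  meet lindenbaum (principal A) (principal B) = principal (And A B).
Proof.
  apply ideal_join_principal.
  - intros I [HA HB] u Iu. apply r_Rand; [apply (HA u Iu)|apply (HB u Iu)].
  - apply (ideal_join_ub _ (principal (And A B))); [split|apply entails_refl];
      intros x Hx; simpl in *; eapply entails_trans; try exact Hx.
    + exact (r_Land1 [] [] A B (ax_id R st A)).
    + exact (r_Land2 [] [] A B (ax_id R st B)).
Qed.

Lemma join2_principal A B :
  ideal_join (fun x => x = principal A \/ x = principal B) = principal (Or A B).
Proof.
  apply ideal_join_principal.
  - intros I [-> | ->] u Hu; eapply entails_trans; [exact Hu|apply or_ub_l|exact Hu|apply or_ub_r].
  - apply mem_or; [apply (ideal_join_ub _ (principal A))|apply (ideal_join_ub _ (principal B))];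
      simpl; auto using entails_refl.
Qed.

Lemma mul_principal A B : ideal_mul (principal A) (principal B) = principal (Tens A B).
Proof.
  apply ideal_le_antisym.
  - apply ideal_mul_least. intros a b Ha Hb. apply tens_mono; auto.
  - intros x Hx. exists A, B. simpl in *. auto using entails_refl.
Qed.

Lemma nab_principal A : ideal_nab (principal A) = principal (Nab A).
Proof.
  apply ideal_le_antisym.
  - apply ideal_nab_least. intros a Ha. apply r_nab, Ha.
  - intros x Hx. exists A. simpl in *. auto using entails_refl.
Qed.

Lemma impl_principal A C : impl lindenbaum (principal A) (principal C) = principal (Imp A C).
Proof.
  apply ideal_ext. intros b. rewrite impl_mem_iff. simpl. rewrite imp_entails_iff. split.
  - intros H. apply tens_entails_iff, H, entails_refl.
  - intros H a Ha. eapply entails_trans; [apply tens_mono; [exact Ha|apply entails_refl]|].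
    apply tens_entails_iff, H.
Qed.

Lemma eval_principal F : eval lindenbaum (fun n => principal (Var n)) F = principal F.
Proof.
  induction F; cbn [eval];
    try rewrite IHF; try rewrite IHF1, IHF2;
    auto using bot_principal, top_principal, meet_principal, join2_principal,
      mul_principal, nab_principal, impl_principal.
Qed.

Fixpoint tens_list (G : list formula) : formula :=
  match G with [] => One | x :: l => Tens x (tens_list l) end.

Lemma prod_principal G : prod lindenbaum (map principal G) = principal (tens_list G).
Proof.
  induction G as [|x l IH]; [reflexivity|].
  unfold prod in *. cbn [map fold_right tens_list]. rewrite IH. apply mul_principal.
Qed.

Lemma derivable_tens_list G : der G (tens_list G).
Proof.
  induction G as [|x l IH]; simpl; [apply ax_one|].
  exact (r_Rtens (ax_id R st x) IH).
Qed.

Lemma lindenbaum_complete G A : models lindenbaum G A -> der G A.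
Proof.
  intros HGA. specialize (HGA (fun n => principal (Var n))).
  rewrite (map_ext _ _ eval_principal), eval_principal, prod_principal in HGA.
  apply (derivable_entails (derivable_tens_list G)), HGA, entails_refl.
Qed.

Lemma derivable_nabs :
  R sN \/ R sH -> forall G A, der G A -> der (nabs G) (Nab A).
Proof.
  intros [HN|HH] G A HGA; [apply r_N; auto|].
  pose proof (@r_H R st G [] A HH) as HGA'. simpl in HGA'. rewrite !app_nil_r in HGA'.
  apply HGA', HGA.
Qed.

Lemma tens_nab_entails_nab_tens :
  R sN \/ R sH -> forall a b, entails (Tens (Nab a) (Nab b)) (Nab (Tens a b)).
Proof.
  intros HN a b. apply tens_entails_iff. exact (derivable_nabs HN [a; b] _ (tens_intro a b)).
Qed.

Lemma lindenbaum_sat_N :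
  R sN \/ R sH -> sat_scheme lindenbaum sN.
Proof.
  intros HN. split.
  - change (ideal_nab (principal One) = principal One).
    rewrite nab_principal. apply principal_eq; [apply ax_nabone|].
    exact (r_L1 [] [] (derivable_nabs HN [] One (ax_one R st))).
  - intros I J. apply ideal_le_antisym; [apply ideal_nab_oplax_mul|].
    intros x [u [v [[a [Ia Hu]] [[b [Jb Hv]] Hx]]]]. exists (Tens a b).
    split; [apply ideal_mul_in; auto|].
    eapply entails_trans; [exact Hx|]. eapply entails_trans; [apply tens_mono; eauto|].
    apply tens_nab_entails_nab_tens, HN.
Qed.

(* Under H, ∇ and [1 -> _] are mutually inverse up to entailment. *)
Lemma imp_one_nab_entails_nab_imp_one :
  R sH -> forall x, entails (Imp One (Nab x)) (Nab (Imp One x)).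
Proof.
  intros HH x. eapply entails_trans.
  - apply imp_entails_iff with (a := Nab One).
    exact (r_cut [] [Nab (Imp One (Nab x))] (ax_nabone R st) (imp_elim One (Nab x))).
  - exact (r_H [] [(One, x)] HH (ax_id R st (Imp One x))).
Qed.

Lemma entails_nab_imp_one : R sH -> forall x, entails x (Nab (Imp One x)).
Proof.
  intros HH x. eapply entails_trans;
    [apply entails_imp_one_nab|apply imp_one_nab_entails_nab_imp_one, HH].
Qed.

Lemma imp_one_nab_entails : R sH -> forall x, entails (Imp One (Nab x)) x.
Proof.
  intros HH x. eapply entails_trans;
    [apply imp_one_nab_entails_nab_imp_one, HH|apply nab_imp_one_entails].
Qed.

Lemma ideal_nab_mem_iff : R sH -> forall (I : ideal) x, mem (ideal_nab I) x <-> mem I (Imp One x).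
Proof.
  intros HH I x. split.
  - intros [j [Ij Hx]]. apply (mem_down I (b := j)); [|exact Ij].
    eapply entails_trans; [apply imp_one_mono, Hx|apply imp_one_nab_entails, HH].
  - intros Ix. exists (Imp One x). split; [exact Ix|apply entails_nab_imp_one, HH].
Qed.

Lemma ideal_nab_impl : R sH ->
  forall I K, ideal_nab (impl lindenbaum I K) = impl lindenbaum (ideal_nab I) (ideal_nab K).
Proof.
  intros HH I K. apply ideal_ext. intros c.
  rewrite (ideal_nab_mem_iff HH), !impl_mem_iff. split.
  - intros Hc x Ix. rewrite (ideal_nab_mem_iff HH) in Ix |- *.
    eapply (mem_down K); [|exact (Hc _ Ix)].
    eapply entails_trans; [|apply imp_one_nab_entails, HH]. apply imp_one_mono.
    eapply entails_trans; [|apply tens_nab_entails_nab_tens; right; exact HH].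
    apply tens_mono; [|apply r_nab]; apply entails_nab_imp_one, HH.
  - intros Hc a Ia.
    pose proof (Hc _ (ideal_nab_in I a Ia)) as HK. rewrite (ideal_nab_mem_iff HH) in HK.
    eapply (mem_down K); [|exact HK].
    eapply entails_trans; [apply entails_imp_one_nab|]. apply imp_one_mono.
    eapply entails_trans; [apply r_oplax, tens_intro|].
    apply tens_mono; [apply entails_refl|apply r_nab, nab_imp_one_entails].
Qed.

Lemma lindenbaum_in_ST : in_ST lindenbaum R.
Proof.
  intros s Hs. destruct s.
  - apply lindenbaum_sat_N; auto.
  - destruct (lindenbaum_sat_N (or_intror Hs)) as [Hunit Hmul].
    split; [exact Hunit|split; [exact Hmul|apply ideal_nab_impl, Hs]].
  - intros I. apply ideal_nab_least. intros a Ia.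
    apply (mem_down I (b := a)); [apply r_P, ax_id; exact Hs|exact Ia].
  - intros I x Ix. apply (mem_down _ (b := Nab x)); [apply r_F, ax_id; exact Hs|].
    apply ideal_nab_in, Ix.
  - intros I HI. rewrite bot_principal in *. apply ideal_le_antisym.
    + intros a Ia. apply r_wF; [exact Hs|].
      change (mem (principal Bot) (Nab a)). rewrite <- HI. apply ideal_nab_in, Ia.
    + intros x Hx. apply (mem_down _ Hx), mem_bot.
Qed.

Lemma lindenbaum_is_locale : st = true -> is_locale lindenbaum.
Proof.
  intros Hst. split.
  - intros I J. apply ideal_le_antisym.
    + apply (ideal_join_ub _ (ideal_mul I J)).
      split; apply ideal_mul_least; intros a b Ia Jb.
      * apply (mem_down I (b := a)); [|exact Ia].
        apply tens_entails_iff. exact (r_weak [a] [] b Hst (ax_id R st a)).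
      * apply (mem_down J (b := b)); [|exact Jb].
        apply tens_entails_iff. exact (r_weak [] [b] a Hst (ax_id R st b)).
    + apply ideal_join_least. intros X [HI HJ] x Xx.
      apply (mem_down _ (r_contr [] [] x Hst (tens_intro x x))).
      apply ideal_mul_in; auto.
  - change (principal One = top lindenbaum). rewrite top_principal.
    apply principal_eq; [apply ax_top|exact (r_weak [] [] Top Hst (ax_one R st))].
Qed.

End Lindenbaum.

Theorem theorem7p12 (R : scheme -> Prop) :
  (exists S : ncspacetime, in_ST S R /\
     forall (G : list formula) (A : formula), models S G A -> derivable R false G A) /\
  (exists S : ncspacetime, in_iST S R /\
     forall (G : list formula) (A : formula), models S G A -> derivable R true G A).
Proof.
  split.
  - exists (lindenbaum R false).
    split; [apply lindenbaum_in_ST|apply lindenbaum_complete].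
  - exists (lindenbaum R true).
    split; [split; [apply lindenbaum_is_locale; reflexivity|apply lindenbaum_in_ST]|].
    apply lindenbaum_complete.
Qed.
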